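(* Let $f:\{0,1\}^n\to\{0,1\}^m$ be a fully balanced function with $r=\dim\operatorname{img}(f)\in\{1,2\}$. Consider the procedure: set $C=B=\varnothing$. Repeat: choose $\mathbf{y}\in\{0,1\}^m\setminus\langle C\cup B\rangle$ and query $\mathbf{y}$. If $\mathbf{y}\in C(f)$, add $\mathbf{y}$ to $C$. Otherwise, if $B=\varnothing$, add $\mathbf{y}$ to $B$; if $B\neq\varnothing$, take $\mathbf{s}\in B$, put $\mathbf{y}'=\mathbf{s}\oplus\mathbf{y}$ and query $\mathbf{y}'$: if $\mathbf{y}'\in C(f)$ add $\mathbf{y}'$ to $C$, otherwise add $\mathbf{y},\mathbf{y}'$ to $B$ and stop with output $r=2$. Whenever $\#C=m-1$, stop with output $r=1$. Then the procedure always outputs the correct value of $r$, using at most $2m-1$ oracle queries.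
   Context: Strings in $\{0,1\}^k$ are identified with vectors of $\mathbb{F}_2^k$; $\oplus$ is bitwise addition mod 2; $\mathbf{a}\cdot\mathbf{b}=\bigoplus_i a_ib_i$; $\langle X\rangle$ is the linear span of $X$. $f$ is $\mathbf{y}$-balanced if $f(\mathbf{x})\cdot\mathbf{y}=0$ for exactly half of the $\mathbf{x}$ and $=1$ for the other half, and $\mathbf{y}$-constant if $f(\mathbf{x})\cdot\mathbf{y}$ is the same for all $\mathbf{x}$. $f$ is fully balanced if for every $\mathbf{y}$ it is $\mathbf{y}$-balanced or $\mathbf{y}$-constant; then $\operatorname{img}(f)$ is an affine subspace. $C(f)=\{\mathbf{y}: f\text{ is }\mathbf{y}\text{-constant}\}$. A query on $\mathbf{y}$ reports whether $\mathbf{y}\in C(f)$ (one run of the Generalised Phase Kick-Back algorithm with marker $\mathbf{y}$, whose output is $\mathbf{0}$ exactly when $f$ is $\mathbf{y}$-constant, for fully balanced $f$). *)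

From HB Require Import structures.
From mathcomp Require Import all_boot all_order all_algebra.
From Stdlib Require Import Relations.
Set Implicit Arguments. Unset Strict Implicit. Unset Printing Implicit Defensive.
Import GRing.Theory.
Local Open Scope ring_scope.

(* Bit strings {0,1}^k as vectors of F_2^k (row vectors over 'F_2). *)
Definition vec (k : nat) := 'rV['F_2]_k.

Definition dot (k : nat) (a b : vec k) : 'F_2 := (a *m b^T) 0 0.

Section Balanced.
Variables (n m : nat) (f : vec n -> vec m).

Definition ycst (y : vec m) : bool :=
  [forall x : vec n, forall x' : vec n, dot (f x) y == dot (f x') y].

Definition ybal (y : vec m) : bool :=
  #|[set x : vec n | dot (f x) y == 0]| == #|[set x : vec n | dot (f x) y == 1]|.

Definition fully_balanced : Prop := forall y : vec m, ybal y || ycst y.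

Definition Cf : {set vec m} := [set y | ycst y].

(* dimension of the affine subspace img(f): dimension of its direction space
   span{ f x - f 0 | x } *)
Definition img_dim : nat := \dim <<[seq f x - f (0%R : vec n) | x : vec n]>>%VS.

(* States of the procedure: sets C, B (as lists) and number of queries so far,
   or a stopped state with the output and the number of queries used. *)
Inductive pstate :=
| Running of seq (vec m) & seq (vec m) & nat
| Stopped of nat & nat.

(* One step of the (nondeterministic) procedure; a query on y reports
   whether y \in Cf. *)
Inductive proc_step : pstate -> pstate -> Prop :=
| step_stop1 C B q :
    size C = m.-1 -> proc_step (Running C B q) (Stopped 1 q)
| step_addC C B q y :
    size C <> m.-1 -> y \notin <<C ++ B>>%VS -> y \in Cf ->
    proc_step (Running C B q) (Running (y :: C) B q.+1)
| step_addB C q y :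
    size C <> m.-1 -> y \notin <<C>>%VS -> y \notin Cf ->
    proc_step (Running C [::] q) (Running C [:: y] q.+1)
| step_addC' C B q y s :
    size C <> m.-1 -> y \notin <<C ++ B>>%VS -> y \notin Cf ->
    s \in B -> (s + y) \in Cf ->
    proc_step (Running C B q) (Running ((s + y) :: C) B q.+2)
| step_stop2 C B q y s :
    size C <> m.-1 -> y \notin <<C ++ B>>%VS -> y \notin Cf ->
    s \in B -> (s + y) \notin Cf ->
    proc_step (Running C B q) (Stopped 2 q.+2).

Definition init_state : pstate := Running [::] [::] 0.

Definition reachable (st : pstate) : Prop :=
  clos_refl_trans pstate proc_step init_state st.

End Balanced.
Arguments Stopped {m}.

(* C(f) is exactly the set of markers orthogonal to the direction space V of
   the affine subspace img(f), and a subspace orthogonal to V has dimension at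
   most m - dim V. So a free family in C(f) has at most m - dim V elements:
   when #C = m - 1 we get dim V <= 1. If dim V = 1 then C(f) is the hyperplane
   orthogonal to a line, whose complement in F_2^m is a single coset, so
   s, y outside C(f) forces s + y inside it, and output 2 is only reached for
   dim V = 2. Since C ++ B stays free and grows at every step, the run stops
   within m steps; each element of C costs at most two queries and the single
   element of B one, which gives the bound 2m - 1. *)

From mathcomp Require Import all_boot all_order all_algebra.
From mathcomp Require Import zify.
From Stdlib Require Import Relations.
Local Open Scope ring_scope.
Import GRing.Theory.

Set Implicit Arguments.
Unset Strict Implicit.
Unset Printing Implicit Defensive.

Lemma dim_rV (F : fieldType) (m : nat) : \dim {:'rV[F]_m} = m.
Proof. by rewrite dimvf; apply: mul1n. Qed.

Lemma free_size_le (F : fieldType) (vT : vectType F) (X : seq vT) :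
  free X -> (size X <= \dim {:vT})%N.
Proof. by move/eqP <-; apply: dimvS (subvf _). Qed.

Lemma exists_notin_vspace (F : fieldType) (vT : vectType F) (U : {vspace vT}) :
  (\dim U < \dim {:vT})%N -> exists y, y \notin U.
Proof.
move=> ltU; exists (vpick U^C).
have : vpick U^C != 0 by rewrite vpick0 -dimv_eq0 dimv_compl subn_eq0 -ltnNge.
by apply: contra => inU; rewrite -memv0 -(capv_compl U) memv_cap inU memv_pick.
Qed.

Lemma mx11_eq0 (R : nmodType) (A : 'M[R]_1) : (A == 0) = (A 0 0 == 0).
Proof.
apply/eqP/eqP => [-> | A00]; first by rewrite mxE.
by apply/matrixP => i j; rewrite !ord1 A00 mxE.
Qed.

Section OrthogonalSpace.
Variables (F : fieldType) (m : nat).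

Definition orthv k (A : 'M[F]_(k, m)) : {vspace 'rV[F]_m} :=
  lker (linfun (mulmxr A^T)).

Lemma mem_orthv k (A : 'M_(k, m)) y : (y \in orthv A) = (y *m A^T == 0).
Proof. by rewrite memv_ker lfunE. Qed.

Lemma orthvC (v w : 'rV[F]_m) : (v \in orthv w) = (w \in orthv v).
Proof. by rewrite !mem_orthv -(inj_eq (@trmx_inj _ _ _)) trmx_mul trmxK trmx0. Qed.

Lemma dim_orthv k (A : 'M_(k, m)) : (m <= \dim (orthv A) + k)%N.
Proof.
have dimE := limg_ker_dim (linfun (mulmxr A^T)) fullv.
rewrite -{1}[m](dim_rV F) -dimE capfv leq_add2l.
by apply: leq_trans (dimvS (subvf _)) _; rewrite dim_rV.
Qed.

Lemma orthv_fullv_eq0 (z : 'rV[F]_m) : (fullv <= orthv z)%VS -> z = 0.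
Proof.
move/subvP=> full; apply/trmx_inj/row_matrixP => i.
have := full _ (memvf (row i 1%:M)); rewrite mem_orthv => /eqP.
by rewrite trmx0 row0 -row_mul mul1mx.
Qed.

(* The orthogonal space of a complement [V^C] of [V] has dimension at least
   [\dim V] and meets [W] trivially, since [V + V^C] is the whole space. *)
Lemma dim_orthogonal (V W : {vspace 'rV[F]_m}) :
  {in V & W, forall v w, v \in orthv w} -> (\dim V + \dim W <= m)%N.
Proof.
move=> VW; set X := vbasis V^C; set A := \matrix_i tnth X i.
have A_orth z : z \in orthv A -> (V^C <= orthv z)%VS.
  rewrite mem_orthv => /eqP zA; rewrite -(span_basis (vbasisP V^C)).
  apply/span_subvP => _ /tnthP [i ->]; rewrite mem_orthv.
  rewrite -(rowK (tnth X) i) -row_mul -[\matrix_i _]trmxK -trmx_mul zA.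
  by rewrite trmx0 row0.
have WA0 : (W :&: orthv A = 0)%VS.
  apply/eqP; rewrite -subv0; apply/subvP => z /memv_capP [zW zA].
  rewrite memv0 (orthv_fullv_eq0 (z := z)) // -(addv_complf V) subv_add A_orth //.
  by rewrite andbT; apply/subvP => v vV; apply: VW.
have := dimv_sum_cap W (orthv A); rewrite WA0 dimv0 addn0.
have := dimvS (subvf (W + orthv A)); have := dimvS (subvf V); have := dim_orthv A.
have := dimv_compl V; rewrite !dim_rV; lia.
Qed.

End OrthogonalSpace.

Lemma F2_add_neq0 (a b : 'F_2) : a != 0 -> b != 0 -> a + b = 0.
Proof. by case: a b => [[|[|?]] ?] [[|[|?]] ?] //= _ _; apply/val_inj => /=. Qed.

Lemma mem_orthv_dot m (v y : vec m) : (y \in orthv v) = (dot v y == 0).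
Proof.
by rewrite mem_orthv mx11_eq0 /dot -[v *m _]trmxK trmx_mul trmxK [in RHS]mxE.
Qed.

Lemma dotBl m (a b y : vec m) : dot (a - b) y = dot a y - dot b y.
Proof. by rewrite /dot mulmxBl [(_ - _ : 'M__) _ _]mxE [(- _ : 'M__) _ _]mxE. Qed.

Lemma dotDr m (v y z : vec m) : dot v (y + z) = dot v y + dot v z.
Proof. by rewrite /dot linearD mulmxDr [(_ + _ : 'M__) _ _]mxE. Qed.

Section ConstantMarkers.
Variables (n m : nat) (f : vec n -> vec m).

Definition dirv : {vspace vec m} := <<[seq f x - f (0%R : vec n) | x : vec n]>>%VS.

Lemma Cf_dirvE y : (y \in Cf f) = (dirv <= orthv y)%VS.
Proof.
rewrite inE; apply/forallP/span_subvP => [cst _ /mapP [x _ ->] | sub x].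
  rewrite orthvC mem_orthv_dot dotBl subr_eq0.
  exact: (forallP (cst x)).
have dotE x' : dot (f x') y = dot (f 0) y.
  apply/eqP; rewrite -subr_eq0 -dotBl -mem_orthv_dot orthvC.
  by apply: sub; apply: map_f; rewrite mem_enum.
by apply/forallP => x'; rewrite !dotE.
Qed.

Lemma img_dim_add_size_Cf (C : seq (vec m)) :
  free C -> {subset C <= Cf f} -> (img_dim f + size C <= m)%N.
Proof.
move=> /eqP dimC CCf; rewrite -dimC; apply: dim_orthogonal => v w vdir wC.
rewrite orthvC; apply: subvP wC; apply/span_subvP => c /CCf.
by rewrite Cf_dirvE orthvC => /subvP; apply.
Qed.

Lemma addr_notin_Cf s y :
  img_dim f = 1%N -> s \notin Cf f -> y \notin Cf f -> s + y \in Cf f.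
Proof.
move=> dim1; set v := vpick dirv.
have dirvE : dirv = <[v]>%VS.
  apply/eqP; rewrite eq_sym eqEdim -memvE memv_pick dim_vline vpick0.
  by rewrite -dimv_eq0 [\dim dirv]dim1.
have CfE z : (z \in Cf f) = (dot v z == 0).
  by rewrite Cf_dirvE dirvE -memvE orthvC mem_orthv_dot.
by rewrite !CfE dotDr => /F2_add_neq0 sum0 /sum0 ->.
Qed.

End ConstantMarkers.

Section Procedure.
Variables (n m : nat) (f : vec n -> vec m).
Hypothesis img_dim_12 : img_dim f = 1%N \/ img_dim f = 2%N.

Definition proc_inv (st : pstate m) : Prop :=
  match st with
  | Running C B q =>
      [/\ {subset C <= Cf f}, free (C ++ B),
          B = [::] \/ (exists2 s, B = [:: s] & s \notin Cf f)
        & (q <= 2 * size C + size B)%N]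
  | Stopped out q => out = img_dim f /\ (q <= 2 * m - 1)%N
  end.

Lemma proc_inv_size C B q : proc_inv (Running C B q) -> (size C + size B <= m)%N.
Proof. by case=> _ /free_size_le; rewrite size_cat dim_rV. Qed.

Lemma proc_inv_step st st' : proc_inv st -> proc_step f st st' -> proc_inv st'.
Proof.
move=> inv st_st'; case: st st' / st_st' inv
  => [C B q | C B q y | C q y | C B q y s | C B q y s] sizeC.
- move=> inv; have sizeCB := proc_inv_size inv; case: inv => CCf freeCB shB qle.
  have := img_dim_add_size_Cf (catl_free freeCB) CCf; rewrite sizeC.
  by case: shB qle sizeCB => [-> | [s -> _]] /=; case: img_dim_12 => ->; lia.
- move=> yCB yCf [CCf freeCB shB qle]; split => //=.
  + by move=> c; rewrite inE => /predU1P [-> | /CCf].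
  + by rewrite free_cons yCB.
  + lia.
- move=> yC yCf [CCf freeC _ qle]; split => //=.
  + have /perm_free -> : perm_eq (C ++ [:: y]) (y :: C) by rewrite perm_catC.
    by rewrite free_cons yC -(cats0 C).
  + by right; exists y.
  + move: qle => /=; lia.
- move=> yCB yCf sB syCf [CCf freeCB shB qle]; split => //=.
  + by move=> c; rewrite inE => /predU1P [-> | /CCf].
  + rewrite free_cons freeCB andbT; apply: contra yCB => syCB.
    by rewrite -(addKr s y) memvD // memvN memv_span // mem_cat sB orbT.
  + lia.
- move=> yCB yCf sB syCf inv; have sizeCB := proc_inv_size inv.
  case: inv => CCf freeCB [BE | [s' BE s'Cf]] qle; first by rewrite BE in sB.
  move: sB s'Cf syCf; rewrite BE inE => /eqP -> s'Cf s'yCf.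
  split.
    by case: img_dim_12 => // /addr_notin_Cf/(_ s'Cf yCf); rewrite (negPf s'yCf).
  rewrite BE /= in qle sizeCB; move: sizeC qle sizeCB; set c := size C; lia.
Qed.

Lemma reachable_inv st : reachable f st -> proc_inv st.
Proof.
move=> reach; elim: (clos_rt_rtn1 _ _ _ _ reach) => [|st1 st2 step _ inv].
  by split=> //; [rewrite /free span_nil dimv0 | left].
exact: proc_inv_step inv step.
Qed.

Lemma proc_inv_progress C B q :
  proc_inv (Running C B q) -> exists st', proc_step f (Running C B q) st'.
Proof.
move=> inv; have sizeCB := proc_inv_size inv; case: inv => CCf freeCB shB _.
have [sizeC | /eqP sizeC] := eqVneq (size C) m.-1.
  by exists (Stopped 1 q); apply: step_stop1.
have [y yCB] : exists y, y \notin <<C ++ B>>%VS.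
  apply: exists_notin_vspace; rewrite (eqP freeCB) dim_rV size_cat.
  have := img_dim_add_size_Cf (catl_free freeCB) CCf.
  move: sizeC sizeCB; set c := size C.
  by case: shB => [-> | [s -> _]] /=; case: img_dim_12 => ->; lia.
have [yCf | yCf] := boolP (y \in Cf f).
  by exists (Running (y :: C) B q.+1); apply: step_addC.
case: shB yCB => [-> | [s -> _]] yCB.
  by exists (Running C [:: y] q.+1); apply: step_addB; rewrite // -(cats0 C).
have [syCf | syCf] := boolP (s + y \in Cf f).
  by exists (Running (s + y :: C) [:: s] q.+2); apply: step_addC'; rewrite ?mem_head.
by exists (Stopped 2 q.+2); apply: (@step_stop2 _ _ _ _ _ _ y s); rewrite ?mem_head.
Qed.

Lemma proc_step_size C B q C' B' q' :
  proc_step f (Running C B q) (Running C' B' q') ->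
  (size C' + size B' = (size C + size B).+1)%N.
Proof. by move=> step; inversion step => /=; rewrite ?addn0 ?addn1. Qed.

Lemma no_infinite_run :
  ~ (exists g : nat -> pstate m, g 0%N = init_state m /\
       forall k, proc_step f (g k) (g k.+1)).
Proof.
case=> g [g0 run].
have reach k : reachable f (g k).
  elim: k => [|k IH]; first by rewrite g0; apply: rt_refl.
  exact: rt_trans IH (rt_step _ _ _ _ (run k)).
have running k : exists C B q, g k = Running C B q /\ (size C + size B)%N = k.
  elim: k => [|k [C [B [q [gk sizek]]]]]; first by rewrite g0; exists [::], [::], 0%N.
  move: (run k) (run k.+1); rewrite gk; case: (g k.+1) => [C' B' q' | o q'] step next.
    by exists C', B', q'; rewrite (proc_step_size step) sizek.
  by inversion next.
have [C [B [q [gm sizem]]]] := running m.+1.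
have := reachable_inv (reach m.+1); rewrite gm => /proc_inv_size.
by rewrite sizem ltnn.
Qed.

End Procedure.

Theorem mainTheorem9 (n m : nat) (f : vec n -> vec m) :
  fully_balanced f ->
  (img_dim f = 1%N \/ img_dim f = 2%N) ->
  (forall C B q, reachable f (Running C B q) ->
     exists st', proc_step f (Running C B q) st') /\
  ~ (exists g : nat -> pstate m, g 0%N = init_state m /\
        forall k, proc_step f (g k) (g k.+1)) /\
  (forall out q, reachable f (Stopped out q) ->
     out = img_dim f /\ (q <= 2 * m - 1)%N).
Proof.
(* Full balancedness is only needed to read a query outcome as membership in
   C(f); here queries are modelled directly by [Cf f]. *)
move=> _ img_dim_12; split; [|split].
- by move=> C B q /(reachable_inv img_dim_12)/proc_inv_progress; apply.
- exact: no_infinite_run.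
- by move=> out q /(reachable_inv img_dim_12).
Qed.
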